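(* Let $M\in\mathbb R^{n\times n}$ be sufficient, $Q\in\mathbb R^{n\times d}$, $q\in\mathbb R^n$ and $S=\{q+Q\theta:\theta\in\mathbb R^d\}$. Then $S_f=S\cap K(M)$ is a convex polyhedron.
   Context: The complementary range $K(M)$ is the set of $q'\in\mathbb R^n$ for which there exist $w,z\in\mathbb R^n$ with $w-Mz=q'$, $w,z\ge0$, $w^Tz=0$. $M$ is column sufficient if $[z_i(Mz)_i\le 0\ \forall i]\Rightarrow[z_i(Mz)_i=0\ \forall i]$; row sufficient if $M^T$ is column sufficient; sufficient if both. *)

From HB Require Import structures.
From mathcomp Require Import all_boot all_order all_algebra.
Set Implicit Arguments. Unset Strict Implicit. Unset Printing Implicit Defensive.
Import Order.TTheory GRing.Theory Num.Theory.
Local Open Scope ring_scope.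

Definition column_sufficient (R : realFieldType) (n : nat) (M : 'M[R]_n) : Prop :=
  forall z : 'cV[R]_n,
    (forall i : 'I_n, z i 0 * (M *m z) i 0 <= 0) ->
    (forall i : 'I_n, z i 0 * (M *m z) i 0 = 0).

Definition row_sufficient (R : realFieldType) (n : nat) (M : 'M[R]_n) : Prop :=
  column_sufficient M^T.

Definition sufficient (R : realFieldType) (n : nat) (M : 'M[R]_n) : Prop :=
  column_sufficient M /\ row_sufficient M.

Definition compl_range (R : realFieldType) (n : nat) (M : 'M[R]_n) (q' : 'cV[R]_n) : Prop :=
  exists (w z : 'cV[R]_n),
    w - M *m z = q' /\
    (forall i : 'I_n, 0 <= w i 0) /\ (forall i : 'I_n, 0 <= z i 0) /\
    (w^T *m z) 0 0 = 0.

Definition polyhedron (R : realFieldType) (n : nat) (P : 'cV[R]_n -> Prop) : Prop :=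
  exists (m : nat) (A : 'M[R]_(m, n)) (b : 'cV[R]_m),
    forall x : 'cV[R]_n, P x <-> (forall i : 'I_m, (A *m x) i 0 <= b i 0).

From HB Require Import structures.
From mathcomp Require Import all_boot all_order all_algebra.
From mathcomp Require Import lra.
Import Order.TTheory GRing.Theory Num.Theory.
Local Open Scope ring_scope.

(* Idea: for a sufficient matrix M the complementary range equals the
   feasible range,
        K(M) = { x | exists z >= 0, x + M z >= 0 },
   i.e. a feasible linear complementarity problem with sufficient matrix is
   solvable.  Then S_f is the projection onto x of the polyhedron
   { (x, theta, z) | x = q + Q theta, z >= 0, x + M z >= 0 }, and projections
   of polyhedra are polyhedra by Fourier-Motzkin elimination. *)

Section Polyhedra.
Context {R : realFieldType}.

Definition nonneg {m : nat} (v : 'cV[R]_m) : Prop := forall i, 0 <= v i 0.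

(* A polyhedron given by inequalities [a t *m v <= b t] indexed by an arbitrary
   finite type; the freedom in the index type makes closure properties easy. *)
Definition fin_polyhedron {p : nat} (P : 'cV[R]_p -> Prop) : Prop :=
  exists (T : finType) (a : T -> 'rV[R]_p) (b : T -> R),
    forall v, P v <-> forall t, (a t *m v) 0 0 <= b t.

Lemma fin_polyhedron_polyhedron {p : nat} (P : 'cV[R]_p -> Prop) :
  fin_polyhedron P -> polyhedron P.
Proof.
case=> T [a [b HP]].
pose Am : 'M[R]_(#|T|, p) := \matrix_(i, j) a (enum_val i) 0 j.
pose bm : 'cV[R]_#|T| := \col_i b (enum_val i).
exists #|T|, Am, bm => v.
have rowE i : (Am *m v) i 0 = (a (enum_val i) *m v) 0 0.
  by rewrite !mxE; apply: eq_bigr => j _; rewrite mxE.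
apply: iff_trans (HP v) _; split=> Hv t; first by rewrite rowE [bm _ _]mxE.
by have := Hv (enum_rank t); rewrite rowE [bm _ _]mxE enum_rankK.
Qed.

Lemma fin_polyhedron_ext {p : nat} {P P' : 'cV[R]_p -> Prop} :
  fin_polyhedron P -> (forall v, P v <-> P' v) -> fin_polyhedron P'.
Proof.
by case=> T [a [b HP]] E; exists T, a, b => v; apply: iff_trans (iff_sym (E v)) (HP v).
Qed.

Lemma fin_polyhedron_preim {m p : nat} (A : 'M[R]_(m, p)) {P : 'cV[R]_m -> Prop} :
  fin_polyhedron P -> fin_polyhedron (fun v => P (A *m v)).
Proof.
case=> T [a [b HP]]; exists T, (fun t => a t *m A), b => v.
by apply: iff_trans (HP _) _; split=> Hv t; have := Hv t; rewrite mulmxA.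
Qed.

Lemma fin_polyhedron_and {p : nat} {P1 P2 : 'cV[R]_p -> Prop} :
  fin_polyhedron P1 -> fin_polyhedron P2 -> fin_polyhedron (fun v => P1 v /\ P2 v).
Proof.
case=> T1 [a1 [b1 H1]] [T2 [a2 [b2 H2]]].
exists (T1 + T2)%type, (fun t => match t with inl t1 => a1 t1 | inr t2 => a2 t2 end),
  (fun t => match t with inl t1 => b1 t1 | inr t2 => b2 t2 end) => v.
rewrite H1 H2; split=> [[Hv1 Hv2] [t1|t2] //|Hv].
by split=> t; [exact: (Hv (inl t)) | exact: (Hv (inr t))].
Qed.

Lemma fin_polyhedron_guarded {p : nat} {T : finType} (g : pred T)
    (a : T -> 'rV[R]_p) (b : T -> R) :
  fin_polyhedron (fun v => forall t, g t -> (a t *m v) 0 0 <= b t).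
Proof.
exists {t : T | g t}, (fun t => a (val t)), (fun t => b (val t)) => v.
by split=> [Hv t|Hv t gt]; [apply: Hv; exact: valP | exact: (Hv (exist _ t gt))].
Qed.

Lemma fin_polyhedron_lower_bounds {p : nat} (e : 'cV[R]_p) :
  fin_polyhedron (fun v => forall i, e i 0 <= v i 0).
Proof.
exists 'I_p, (fun i => - delta_mx 0 i), (fun i => - e i 0) => v.
have rowE i : ((- delta_mx 0 i : 'rV[R]_p) *m v) 0 0 = - v i 0.
  by rewrite mulNmx -rowE !mxE.
by split=> H i; have := H i; rewrite rowE lerN2.
Qed.

(* If every lower bound is below every upper bound, some point separates them
   (finitely many bounds, so the extreme ones are attained). *)
Lemma exists_between (T : finType) (lo hi : pred T) (L U : T -> R) :
  (forall j i, lo j -> hi i -> L j <= U i) ->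
  exists s, (forall j, lo j -> L j <= s) /\ (forall i, hi i -> s <= U i).
Proof.
move=> LU; case: (pickP lo) => [j0 lo_j0|no_lo].
  case: (arg_maxP L lo_j0) => j lo_j maxj.
  by exists (L j); split=> [j' /maxj|i /(LU j i lo_j)].
case: (pickP hi) => [i0 hi_i0|no_hi].
  case: (arg_minP U hi_i0) => i hi_i mini.
  by exists (U i); split=> [j|i' /mini]; rewrite ?no_lo.
by exists 0; split=> x; rewrite ?no_lo ?no_hi.
Qed.

Lemma shifted_le_pos (x s c b : R) : 0 < c -> (x + s * c <= b) = (s <= (b - x) / c).
Proof. by move=> c_gt0; rewrite ler_pdivlMr // lerBrDl. Qed.

Lemma shifted_le_neg (x s c b : R) : c < 0 -> (x + s * c <= b) = ((b - x) / c <= s).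
Proof. by move=> c_lt0; rewrite ler_ndivrMr // lerBrDl. Qed.

(* For c_i > 0 > c_j, comparing the two roots is the nonnegative combination
   of the i-th and j-th inequalities that cancels s. *)
Lemma roots_le (xi xj ci cj bi bj : R) : 0 < ci -> cj < 0 ->
  ((bj - xj) / cj <= (bi - xi) / ci) = (- cj * xi + ci * xj <= - cj * bi + ci * bj).
Proof.
move=> ci_gt0 cj_lt0; rewrite ler_ndivrMr // mulrAC ler_pdivrMr //.
apply/idP/idP => H; lra.
Qed.

Lemma fourier_motzkin_scalar (T : finType) (x c b : T -> R) :
  (exists s, forall t, x t + s * c t <= b t) <->
  (forall t, c t = 0 -> x t <= b t) /\
  (forall i j, 0 < c i -> c j < 0 -> - c j * x i + c i * x j <= - c j * b i + c i * b j).
Proof.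
pose root t := (b t - x t) / c t.
split=> [[s Hs]|[Hz Hp]].
  split=> [t ct|i j ci cj]; first by have := Hs t; rewrite ct mulr0 addr0.
  rewrite -roots_le // (@le_trans _ _ s) //; first by rewrite -shifted_le_neg.
  by rewrite -shifted_le_pos.
have [s [Hlo Hhi]] : exists s, (forall j, c j < 0 -> root j <= s) /\
                               (forall i, 0 < c i -> s <= root i).
  by apply: exists_between => j i cj ci; rewrite roots_le // Hp.
exists s => t; case: (ltrgtP (c t) 0) => ct.
- by rewrite shifted_le_neg // Hlo.
- by rewrite shifted_le_pos // Hhi.
- by rewrite ct mulr0 addr0 Hz.
Qed.

Lemma fin_polyhedron_elim1 {m : nat} {P : 'cV[R]_m -> Prop} (c : 'cV[R]_m) :
  fin_polyhedron P -> fin_polyhedron (fun w => exists s : R, P (w + s *: c)).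
Proof.
case=> T [a [b HP]].
pose x t (w : 'cV[R]_m) := (a t *m w) 0 0; pose ct t := (a t *m c) 0 0.
have shiftE w s t : (a t *m (w + s *: c)) 0 0 = x t w + s * ct t.
  by rewrite mulmxDr -scalemxAr mxE [in X in _ + X]mxE mulrC.
pose comb (ij : T * T) := - ct ij.2 *: a ij.1 + ct ij.1 *: a ij.2.
have combE ij w : (comb ij *m w) 0 0 = - ct ij.2 * x ij.1 w + ct ij.1 * x ij.2 w.
  by rewrite mulmxDl -!scalemxAl /x !mxE.
apply: fin_polyhedron_ext (fin_polyhedron_and
  (fin_polyhedron_guarded (fun t => ct t == 0) a b)
  (fin_polyhedron_guarded (fun ij : T * T => (0 < ct ij.1) && (ct ij.2 < 0)) comb
     (fun ij => - ct ij.2 * b ij.1 + ct ij.1 * b ij.2))) _ => w.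
split=> [[Hz Hp]|[s /HP Hs]].
  have [s Hs] : exists s, forall t, x t w + s * ct t <= b t.
    apply/fourier_motzkin_scalar; split=> [t /eqP/Hz //|i j ci cj].
    by have := Hp (i, j); rewrite /= ci cj combE => /(_ isT).
  by exists s; apply/HP => t; rewrite shiftE.
have /fourier_motzkin_scalar[Hz Hp] : exists s, forall t, x t w + s * ct t <= b t.
  by exists s => t; rewrite -shiftE.
by split=> [t /eqP/Hz //|[i j] /andP[ci cj]]; rewrite combE; apply: Hp.
Qed.

Lemma fin_polyhedron_proj {m k : nat} {P : 'cV[R]_m -> Prop} (B : 'M[R]_(m, k)) :
  fin_polyhedron P -> fin_polyhedron (fun w => exists y : 'cV[R]_k, P (w + B *m y)).
Proof.
elim: k B => [|k IH] B HP.
  apply: fin_polyhedron_ext HP _ => w; split=> [Pw|[y]]; first by exists 0; rewrite mulmx0 addr0.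
  by rewrite [y]flatmx0 mulmx0 addr0.
pose c : 'cV[R]_m := lsubmx (B : 'M_(m, 1 + k)).
pose B' : 'M[R]_(m, k) := rsubmx (B : 'M_(m, 1 + k)).
have splitE (s : R) (y : 'cV[R]_k) : B *m (col_mx s%:M y : 'cV_(1 + k)) = s *: c + B' *m y.
  by rewrite -[B in LHS](hsubmxK (B : 'M_(m, 1 + k))) (@mul_row_col _ m 1 k 1) mul_mx_scalar.
apply: fin_polyhedron_ext (fin_polyhedron_elim1 c (IH B' HP)) _ => w.
split=> [[s [y Hy]]|[y Hy]]; first by exists (col_mx s%:M y); rewrite splitE addrA.
exists (usubmx (y : 'cV_(1 + k)) 0 0), (dsubmx (y : 'cV_(1 + k))).
by rewrite -addrA -splitE -mx11_scalar vsubmxK.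
Qed.

End Polyhedra.

Section Modes.
Context {R : realFieldType}.

(* A mode prescribes the constraint on a pair (w_i, z_i): [None] asks for
   complementarity (w_i, z_i >= 0 and w_i z_i = 0), [Some true] fixes z_i = 0
   with w_i free, [Some false] fixes w_i = 0 with z_i free. *)
Definition primal_ok (m : option bool) (w z : R) : Prop :=
  match m with
  | None => [/\ 0 <= w, 0 <= z & w * z = 0]
  | Some true => z = 0
  | Some false => w = 0
  end.

(* The dual constraints on ((A^T y)_i, (B^T y)_i) attached to a mode: the
   coefficient of a free primal coordinate must vanish. *)
Definition dual_ok (m : option bool) (a b : R) : Prop :=
  match m with
  | None => [/\ 0 <= a, 0 <= b & a * b = 0]
  | Some true => a = 0
  | Some false => b = 0
  end.

Lemma primal_ok_diff m (w1 z1 w2 z2 : R) :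
  primal_ok m w1 z1 -> primal_ok m w2 z2 -> (w1 - w2) * (z1 - z2) <= 0.
Proof.
case: m => [[]|] /= => [-> ->|-> ->|[w1_ge0 z1_ge0 e1] [w2_ge0 z2_ge0 e2]].
- by rewrite subrr mulr0.
- by rewrite subrr mul0r.
- rewrite mulrBl !mulrBr e1 e2 sub0r subr0 -opprD oppr_le0.
  by rewrite addr_ge0 ?mulr_ge0.
Qed.

Lemma dual_ok_sum m (a1 b1 a2 b2 : R) :
  dual_ok m a1 b1 -> dual_ok m a2 b2 -> 0 <= (a1 + a2) * (b1 + b2).
Proof.
case: m => [[]|] /= => [-> ->|-> ->|[a1_ge0 b1_ge0 _] [a2_ge0 b2_ge0 _]].
- by rewrite addr0 mul0r.
- by rewrite addr0 mulr0.
- by rewrite mulr_ge0 ?addr_ge0.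
Qed.

Lemma primal_dual_ok m (w z a b : R) :
  primal_ok m w z -> dual_ok m a b -> 0 <= a * w + b * z.
Proof.
case: m => [[]|] /= => [-> ->|-> ->|[w_ge0 z_ge0 _] [a_ge0 b_ge0 _]].
- by rewrite mul0r mulr0 addr0.
- by rewrite mul0r mulr0 addr0.
- by rewrite addr_ge0 ?mulr_ge0.
Qed.

Definition fix_mode {N : nat} (md : 'I_N -> option bool) (n : 'I_N) (b : bool) :
    'I_N -> option bool :=
  fun i => if i == n then Some b else md i.

Lemma fix_modeP {N : nat} (ok : option bool -> R -> R -> Prop) md n b (u v : 'cV[R]_N) :
  (forall i, ok (fix_mode md n b i) (u i 0) (v i 0)) ->
  ok (Some b) (u n 0) (v n 0) /\ forall i, i != n -> ok (md i) (u i 0) (v i 0).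
Proof.
move=> H; split=> [|i ne]; first by have := H n; rewrite /fix_mode eqxx.
by have := H i; rewrite /fix_mode (negbTE ne).
Qed.

Lemma unfix_mode {N : nat} (ok : option bool -> R -> R -> Prop) md (n : 'I_N) (u v : 'cV[R]_N) :
  (forall i, i != n -> ok (md i) (u i 0) (v i 0)) -> ok (md n) (u n 0) (v n 0) ->
  forall i, ok (md i) (u i 0) (v i 0).
Proof. by move=> off at_n i; have [->|] := eqVneq i n; [exact: at_n | exact: off]. Qed.

End Modes.

Section LinearAlternative.
Context {R : realFieldType} {k N : nat}.

Lemma dot_sum (u v : 'cV[R]_k) : (u^T *m v) 0 0 = \sum_i u i 0 * v i 0.
Proof. by rewrite mxE; apply: eq_bigr => i _; rewrite mxE. Qed.

Lemma linear_alternative (G : 'M[R]_(k, N)) (q : 'cV[R]_k) :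
  (exists x : 'cV_N, G *m x = q) \/ (exists y : 'cV_k, G^T *m y = 0 /\ (q^T *m y) 0 0 < 0).
Proof.
case: (boolP (q^T <= G^T)%MS) => [/submxP[D qD]|].
  by left; exists D^T; rewrite -[q]trmxK qD trmx_mul trmxK.
rewrite submxE; set K := cokermx G^T => qK_neq0.
have [j qKj] : exists j, (q^T *m K) 0 j != 0.
  apply/existsP; apply: contraR qK_neq0 => /existsPn qK0.
  by apply/eqP/matrixP => i j; rewrite [i]ord1 [RHS]mxE; apply/eqP/negPn/qK0.
set r := (q^T *m K) 0 j.
right; exists (- r *: col j K); split.
  by rewrite -scalemxAr colE mulmxA mulmx_coker mul0mx scaler0.
rewrite -scalemxAr colE mulmxA -colE mxE [col _ _ _ _]mxE -/r mulNr oppr_lt0 -expr2.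
by rewrite lt0r sqrf_eq0 qKj sqr_ge0.
Qed.

End LinearAlternative.

Section ComplementarityAlternative.
Context {R : realFieldType} {k N : nat} (A B : 'M[R]_(k, N)) (q : 'cV[R]_k).

Definition primal_sufficient : Prop :=
  forall w z : 'cV[R]_N, A *m w + B *m z = 0 ->
    (forall i, w i 0 * z i 0 <= 0) -> forall i, w i 0 * z i 0 = 0.

Definition dual_sufficient : Prop :=
  forall y : 'cV[R]_k, (forall i, 0 <= (A^T *m y) i 0 * (B^T *m y) i 0) ->
    forall i, (A^T *m y) i 0 * (B^T *m y) i 0 = 0.

Definition solvable (md : 'I_N -> option bool) : Prop :=
  exists w z : 'cV[R]_N, A *m w + B *m z = q /\ forall i, primal_ok (md i) (w i 0) (z i 0).

Definition infeasibility_cert (md : 'I_N -> option bool) : Prop :=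
  exists y : 'cV[R]_k, (q^T *m y) 0 0 < 0 /\
    forall i, dual_ok (md i) ((A^T *m y) i 0) ((B^T *m y) i 0).

(* Weak duality: if y pairs nonnegatively with a solution then q^T y >= 0,
   so a system cannot have both a solution and a certificate. *)
Lemma weak_duality {w z : 'cV[R]_N} (y : 'cV[R]_k) : A *m w + B *m z = q ->
  (forall i, 0 <= (A^T *m y) i 0 * w i 0 + (B^T *m y) i 0 * z i 0) -> 0 <= (q^T *m y) 0 0.
Proof.
move=> <- terms_ge0.
rewrite linearD /= !trmx_mul mulmxDl -!mulmxA mxE !dot_sum -big_split sumr_ge0 //= => i _.
by rewrite [w i 0 * _]mulrC [z i 0 * _]mulrC.
Qed.

(* Base case: with no complementary pair the system is linear in the free
   coordinates and the Fredholm alternative applies. *)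
Lemma alternative_fixed md : (forall i, md i != None) -> solvable md \/ infeasibility_cert md.
Proof.
move=> fixed; pose zfree i := md i == Some false.
pose G := \matrix_(r, i) if zfree i then B r i else A r i.
have [[x Gx]|[y [Gy qy]]] := linear_alternative G q; [left|right].
  exists (\col_i if zfree i then 0 else x i 0), (\col_i if zfree i then x i 0 else 0).
  split; last by move=> i; rewrite !mxE /zfree; move: (fixed i); case: (md i) => [[]|].
  rewrite -Gx; apply/matrixP => r j; rewrite [j]ord1 !mxE -big_split; apply: eq_bigr => i _ /=.
  by rewrite !mxE; case: (zfree i); rewrite ?mulr0 ?addr0 ?add0r.
have GyE i : (G^T *m y) i 0 = if zfree i then (B^T *m y) i 0 else (A^T *m y) i 0.
  by rewrite !mxE; case E: (zfree i); apply: eq_bigr => r _; rewrite !mxE E.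
exists y; split=> // i; have := GyE i; rewrite Gy mxE /zfree.
by move: (fixed i); case: (md i) => [[]|] //= _ <-.
Qed.

(* The three ways in which the outcomes for the two fixings of a
   complementary coordinate n can fail to extend to n are incompatible with
   sufficiency or weak duality. *)
Lemma primal_conflict {md n} {w1 z1 w2 z2 : 'cV[R]_N} : primal_sufficient ->
  A *m w1 + B *m z1 = q -> A *m w2 + B *m z2 = q ->
  (forall i, i != n -> primal_ok (md i) (w1 i 0) (z1 i 0)) ->
  (forall i, i != n -> primal_ok (md i) (w2 i 0) (z2 i 0)) ->
  (w1 n 0 - w2 n 0) * (z1 n 0 - z2 n 0) < 0 -> False.
Proof.
move=> hP E1 E2 O1 O2 lt_n.
have ker : A *m (w1 - w2) + B *m (z1 - z2) = 0.
  by rewrite !mulmxBr addrACA -opprD E1 E2 subrr.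
have le_all i : (w1 - w2) i 0 * (z1 - z2) i 0 <= 0.
  rewrite !mxE; have [->|ne] := eqVneq i n; first exact: ltW.
  exact: primal_ok_diff (O1 i ne) (O2 i ne).
by move: (hP _ _ ker le_all n); rewrite !mxE => /eqP; rewrite lt_eqF.
Qed.

Lemma dual_conflict {md n} {y1 y2 : 'cV[R]_k} : dual_sufficient ->
  (forall i, i != n -> dual_ok (md i) ((A^T *m y1) i 0) ((B^T *m y1) i 0)) ->
  (forall i, i != n -> dual_ok (md i) ((A^T *m y2) i 0) ((B^T *m y2) i 0)) ->
  0 < ((A^T *m y1) n 0 + (A^T *m y2) n 0) * ((B^T *m y1) n 0 + (B^T *m y2) n 0) -> False.
Proof.
move=> hD D1 D2 gt_n.
have entryD (C : 'M[R]_(N, k)) i : (C *m (y1 + y2)) i 0 = (C *m y1) i 0 + (C *m y2) i 0.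
  by rewrite mulmxDr mxE.
have ge_all i : 0 <= (A^T *m (y1 + y2)) i 0 * (B^T *m (y1 + y2)) i 0.
  rewrite !entryD; have [->|ne] := eqVneq i n; first exact: ltW.
  exact: dual_ok_sum (D1 i ne) (D2 i ne).
by move: (hD _ ge_all n); rewrite !entryD => /eqP; rewrite gt_eqF.
Qed.

Lemma mixed_conflict {md n} {w z : 'cV[R]_N} {y : 'cV[R]_k} :
  A *m w + B *m z = q -> (q^T *m y) 0 0 < 0 ->
  (forall i, i != n -> primal_ok (md i) (w i 0) (z i 0)) ->
  (forall i, i != n -> dual_ok (md i) ((A^T *m y) i 0) ((B^T *m y) i 0)) ->
  0 < (A^T *m y) n 0 * w n 0 + (B^T *m y) n 0 * z n 0 -> False.
Proof.
move=> E qy O D gt_n.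
have ge_all i : 0 <= (A^T *m y) i 0 * w i 0 + (B^T *m y) i 0 * z i 0.
  have [->|ne] := eqVneq i n; first exact: ltW.
  exact: primal_dual_ok (O i ne) (D i ne).
by move: (weak_duality y E ge_all); rewrite leNgt qy.
Qed.

(* Induction step: unfix a complementary coordinate n.  The outcome for one
   of the two fixings extends to n, unless they are in one of the conflicts
   above. *)
Lemma alternative_step {md n} : primal_sufficient -> dual_sufficient -> md n = None ->
  (forall b, solvable (fix_mode md n b) \/ infeasibility_cert (fix_mode md n b)) ->
  solvable md \/ infeasibility_cert md.
Proof.
move=> hP hD md_n IH.
have [[w1 [z1 [E1 /fix_modeP[/= z1n O1]]]]|[y1 [C1 /fix_modeP[/= a1n D1]]]] := IH true;
have [[w2 [z2 [E2 /fix_modeP[/= w2n O2]]]]|[y2 [C2 /fix_modeP[/= b2n D2]]]] := IH false.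
- have [w1n|w1n] := lerP 0 (w1 n 0).
    by left; exists w1, z1; split=> //; apply: unfix_mode O1 _; rewrite md_n /= z1n mulr0.
  have [z2n|z2n] := lerP 0 (z2 n 0).
    by left; exists w2, z2; split=> //; apply: unfix_mode O2 _; rewrite md_n /= w2n mul0r.
  exfalso; apply: (primal_conflict hP E1 E2 O1 O2).
  by rewrite z1n w2n subr0 sub0r pmulr_llt0 // oppr_gt0.
- have [w1n|w1n] := lerP 0 (w1 n 0).
    by left; exists w1, z1; split=> //; apply: unfix_mode O1 _; rewrite md_n /= z1n mulr0.
  have [a2n|a2n] := lerP 0 ((A^T *m y2) n 0).
    by right; exists y2; split=> //; apply: unfix_mode D2 _; rewrite md_n /= b2n mulr0.
  exfalso; apply: (mixed_conflict E1 C2 O1 D2).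
  by rewrite z1n mulr0 addr0 nmulr_rgt0.
- have [b1n|b1n] := lerP 0 ((B^T *m y1) n 0).
    by right; exists y1; split=> //; apply: unfix_mode D1 _; rewrite md_n /= a1n mul0r.
  have [z2n|z2n] := lerP 0 (z2 n 0).
    by left; exists w2, z2; split=> //; apply: unfix_mode O2 _; rewrite md_n /= w2n mul0r.
  exfalso; apply: (mixed_conflict E2 C1 O2 D1).
  by rewrite a1n mul0r add0r nmulr_rgt0.
- have [b1n|b1n] := lerP 0 ((B^T *m y1) n 0).
    by right; exists y1; split=> //; apply: unfix_mode D1 _; rewrite md_n /= a1n mul0r.
  have [a2n|a2n] := lerP 0 ((A^T *m y2) n 0).
    by right; exists y2; split=> //; apply: unfix_mode D2 _; rewrite md_n /= b2n mulr0.
  exfalso; apply: (dual_conflict hD D1 D2).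
  by rewrite a1n b2n add0r addr0 nmulr_rgt0.
Qed.

Theorem complementarity_alternative md : primal_sufficient -> dual_sufficient ->
  solvable md \/ infeasibility_cert md.
Proof.
move=> hP hD; move: {2}#|[pred i | md i == None]| (leqnn #|[pred i | md i == None]|) => c.
elim: c md => [|c IH] md free_le.
  apply: alternative_fixed => i; apply: contraTneq free_le => md_i.
  by rewrite -ltnNge; apply/card_gt0P; exists i; rewrite inE md_i.
case: (pickP [pred i | md i == None]) => [n /eqP md_n|none]; last first.
  by apply: alternative_fixed => i; have := none i; rewrite inE => ->.
apply: (alternative_step hP hD md_n) => b; apply: IH.
rewrite (cardD1 n) inE md_n eqxx add1n ltnS in free_le; apply: leq_trans free_le.
apply: subset_leq_card; apply/subsetP => i; rewrite !inE /fix_mode.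
by case: (i =P n).
Qed.

End ComplementarityAlternative.

Section SufficientLCP.
Context {R : realFieldType} {n : nat} (M : 'M[R]_n).

Lemma column_sufficient_primal : column_sufficient M -> primal_sufficient 1%:M (- M).
Proof.
move=> colM w z; rewrite mul1mx mulNmx => /eqP; rewrite subr_eq0 => /eqP -> wz_le0 i.
by rewrite mulrC; apply: colM => j; rewrite mulrC.
Qed.

Lemma row_sufficient_dual : row_sufficient M -> dual_sufficient 1%:M (- M).
Proof.
have trE (y : 'cV[R]_n) i : ((- M)^T *m y) i 0 = - (M^T *m y) i 0.
  by rewrite linearN /= mulNmx mxE.
move=> rowM y yMy_ge0 i; rewrite trmx1 mul1mx trE mulrN.
apply/eqP; rewrite oppr_eq0; apply/eqP; apply: rowM => j.
by have := yMy_ge0 j; rewrite trmx1 mul1mx trE mulrN oppr_ge0.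
Qed.

(* A feasible LCP with sufficient matrix is solvable: a certificate of
   infeasibility would contradict weak duality with a feasible point. *)
Lemma sufficient_feasible_solvable (x : 'cV[R]_n) : sufficient M ->
  (exists z, nonneg z /\ nonneg (x + M *m z)) -> compl_range M x.
Proof.
move=> [colM rowM] [z0 [z0_ge0 w0_ge0]].
have [[w [z [E O]]]|[y [xy D]]] := complementarity_alternative 1%:M (- M) x (fun=> None)
  (column_sufficient_primal colM) (row_sufficient_dual rowM).
  exists w, z; rewrite mul1mx mulNmx in E; split=> //.
  split; first by move=> i; case: (O i).
  split; first by move=> i; case: (O i).
  by rewrite dot_sum big1 // => i _; case: (O i).
have E0 : 1%:M *m (x + M *m z0) + (- M) *m z0 = x by rewrite mul1mx mulNmx addrK.
have terms_ge0 i : 0 <= ((1%:M)^T *m y) i 0 * (x + M *m z0) i 0 + ((- M)^T *m y) i 0 * z0 i 0.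
  by case: (D i) => a_ge0 b_ge0 _; rewrite addr_ge0 ?mulr_ge0.
by move: (weak_duality 1%:M (- M) x y E0 terms_ge0); rewrite leNgt xy.
Qed.

Lemma compl_range_feasible (x : 'cV[R]_n) : sufficient M ->
  compl_range M x <-> exists z, nonneg z /\ nonneg (x + M *m z).
Proof.
move=> suffM; split=> [[w [z [<- [w_ge0 [z_ge0 _]]]]]|]; last exact: sufficient_feasible_solvable.
by exists z; split=> // i; rewrite subrK.
Qed.

End SufficientLCP.

Section FeasibleRegion.
Context {R : realFieldType}.

Lemma col_mx_le {m1 m2 : nat} (a c : 'cV[R]_m1) (b e : 'cV[R]_m2) :
  (forall i, col_mx a b i 0 <= col_mx c e i 0) <->
  (forall i, a i 0 <= c i 0) /\ (forall i, b i 0 <= e i 0).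
Proof.
split=> [H|[Hu Hd] i]; first by split=> i; [move: (H (lshift m2 i)) | move: (H (rshift m1 i))];
  rewrite ?col_mxEu ?col_mxEd.
by rewrite -(splitK i); case: split => j; rewrite ?col_mxEu ?col_mxEd.
Qed.

(* The x-projection of { (theta, z) | x = q + Q theta, z >= 0, x + M z >= 0 }
   is a polyhedron, for any M: the equation is written as two inequalities
   and the whole system as [e <= Ax x + By (theta; z)]. *)
Lemma fin_polyhedron_feasible_region {n d : nat} (M : 'M[R]_n) (Q : 'M[R]_(n, d))
    (q : 'cV[R]_n) :
  fin_polyhedron (fun x => exists (th : 'cV[R]_d) (z : 'cV[R]_n),
    x = q + Q *m th /\ nonneg z /\ nonneg (x + M *m z)).
Proof.
pose Ax : 'M[R]_(n + n + (n + n), n) := col_mx (col_mx 1%:M (- 1%:M)) (col_mx 0 1%:M).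
pose By : 'M[R]_(n + n + (n + n), d + n) :=
  col_mx (col_mx (row_mx (- Q) 0) (row_mx Q 0)) (col_mx (row_mx 0 1%:M) (row_mx 0 M)).
pose e : 'cV[R]_(n + n + (n + n)) := col_mx (col_mx q (- q)) (col_mx 0 0).
have systemE x (th : 'cV[R]_d) (z : 'cV[R]_n) : Ax *m x + By *m col_mx th z =
    col_mx (col_mx (x - Q *m th) (- x + Q *m th)) (col_mx z (x + M *m z)).
  by rewrite !mul_col_mx !mul_row_col !add_col_mx !mul1mx !mulNmx !mul0mx !addr0 !add0r mul1mx.
apply: fin_polyhedron_ext (fin_polyhedron_preim Ax
  (fin_polyhedron_proj By (fin_polyhedron_lower_bounds e))) _ => x /=.
split=> [[y]|[th [z [-> [z_ge0 w_ge0]]]]]; last first.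
  exists (col_mx th z); rewrite systemE addrK opprD addrNK.
  apply/col_mx_le; split; apply/col_mx_le; split=> i //.
  - by rewrite mxE; exact: z_ge0.
  - by rewrite mxE; exact: w_ge0.
rewrite -[y]vsubmxK systemE => /col_mx_le[/col_mx_le[lo hi] /col_mx_le[z_ge0 w_ge0]].
exists (usubmx y), (dsubmx y); split; last first.
  by split=> i; [move: (z_ge0 i) | move: (w_ge0 i)]; rewrite mxE.
apply/matrixP => i j; rewrite [j]ord1; apply/eqP; rewrite eq_le.
move: (lo i) (hi i); rewrite !mxE lerBrDr lerNl opprD opprK lerBlDr => -> ->.
by rewrite andbT.
Qed.

End FeasibleRegion.

(* Main theorem: by [compl_range_feasible], S ∩ K(M) is the feasible region
   above. *)
Theorem mainTheorem6 (R : realFieldType) (n d : nat) (M : 'M[R]_n)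
    (Q : 'M[R]_(n, d)) (q : 'cV[R]_n) :
  sufficient M ->
  polyhedron (fun x : 'cV[R]_n =>
    (exists theta : 'cV[R]_d, x = q + Q *m theta) /\ compl_range M x).
Proof.
move=> suffM; apply: fin_polyhedron_polyhedron.
apply: fin_polyhedron_ext (fin_polyhedron_feasible_region M Q q) _ => x.
split=> [[th [z [xE feas]]]|[[th xE] /(compl_range_feasible M x suffM)[z feas]]].
  by split; [exists th | apply/(compl_range_feasible M x suffM); exists z].
by exists th, z.
Qed.
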